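(* Let $R$ be a commutative ring with identity and $M$ a non-zero comultiplication $R$-module. Then $M$ is uniform if and only if $M$ is cocyclic.
   Context: An $R$-module $M$ is a comultiplication module if for every submodule $N$ of $M$ there is an ideal $I$ of $R$ with $N=\mathrm{Ann}_M(I)$. $M$ is uniform if any two non-zero submodules of $M$ have non-zero intersection. $\mathrm{Soc}(M)$ is the sum of all minimal submodules of $M$; $M$ is cocyclic if $\mathrm{Soc}(M)$ is a simple submodule of $M$ that is large in $M$ (a submodule $N$ is large if $N\cap L\neq0$ for every non-zero submodule $L$). *)

From HB Require Import structures.
From mathcomp Require Import all_boot all_order all_algebra.
Set Implicit Arguments. Unset Strict Implicit. Unset Printing Implicit Defensive.
Import GRing.Theory.
Local Open Scope ring_scope.

Section ModuleDefs.
Variables (R : comNzRingType) (M : lmodType R).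

Definition submodule (N : M -> Prop) : Prop :=
  [/\ N 0, (forall x y, N x -> N y -> N (x + y)) &
      (forall (r : R) x, N x -> N (r *: x))].

Definition ideal (I : R -> Prop) : Prop :=
  [/\ I 0, (forall a b, I a -> I b -> I (a + b)) &
      (forall r a, I a -> I (r * a))].

Definition AnnM (I : R -> Prop) : M -> Prop :=
  fun m => forall r, I r -> r *: m = 0.

Definition comultiplication : Prop :=
  forall N : M -> Prop, submodule N ->
    exists I : R -> Prop, ideal I /\ (forall m, N m <-> AnnM I m).

Definition nonzero_sub (N : M -> Prop) : Prop := exists m, N m /\ m <> 0.

Definition subI (N L : M -> Prop) : M -> Prop := fun m => N m /\ L m.

Definition uniform : Prop :=
  forall N L, submodule N -> submodule L -> nonzero_sub N -> nonzero_sub L ->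
    nonzero_sub (subI N L).

Definition minimal_sub (N : M -> Prop) : Prop :=
  [/\ submodule N, nonzero_sub N &
      forall L, submodule L -> (forall m, L m -> N m) -> nonzero_sub L ->
        forall m, N m -> L m].

(* Soc(M): sum of all minimal submodules, i.e. finite sums of elements
   each lying in some minimal submodule *)
Definition Soc : M -> Prop :=
  fun m => exists s : seq M,
    (forall x, x \in s -> exists N, minimal_sub N /\ N x) /\
    m = \sum_(x <- s) x.

Definition large (N : M -> Prop) : Prop :=
  forall L, submodule L -> nonzero_sub L -> nonzero_sub (subI N L).

Definition cocyclic : Prop := minimal_sub Soc /\ large Soc.

End ModuleDefs.

(** In a comultiplication module every non-zero submodule contains a simple
   one: for [m <> 0] pick a maximal ideal [Q] containing [Ann(m)]; writing
   [Q m = Ann_M(I)], some [r] in [I] has [x := r m <> 0] while [Q x = 0], so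
   [R x] is simple.  Hence [Soc(M)] is always large.  If [M] is uniform, every
   simple submodule meets a fixed simple [K] and so equals it, giving
   [Soc(M) = K].  Conversely a simple large socle lies inside every non-zero
   submodule, so any two of them meet in it. *)
From HB Require Import structures.
From mathcomp Require Import all_boot all_order all_algebra.
From mathcomp Require Import boolp classical_sets.
Set Implicit Arguments. Unset Strict Implicit. Unset Printing Implicit Defensive.
Import GRing.Theory.
Local Open Scope ring_scope.
Local Open Scope classical_set_scope.

Section MaximalIdeals.
Variable R : comNzRingType.

Definition proper_ideal (I : set R) : Prop := ideal I /\ ~ I 1.

Lemma ideal_bigcup_chain (F : set (set R)) :
  (forall X, F X -> ideal X) -> total_on F subset -> (exists X, F X) ->
  ideal (\bigcup_(X in F) X).
Proof.
move=> idF Ftot [X0 FX0]; split.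
- by exists X0 => //; case: (idF X0 FX0).
- move=> a b [X FX Xa] [Y FY Yb].
  case: (Ftot X Y FX FY) => [XY|YX].
  + by exists Y => //; case: (idF Y FY) => _ YD _; apply: YD => //; apply: XY.
  + by exists X => //; case: (idF X FX) => _ XD _; apply: XD => //; apply: YX.
- by move=> r a [X FX Xa]; exists X => //; case: (idF X FX) => _ _ XM; apply: XM.
Qed.

Lemma exists_maximal_ideal (P : set R) : proper_ideal P ->
  exists Q, [/\ proper_ideal Q, P `<=` Q & forall J, Q `<` J -> ~ proper_ideal J].
Proof.
move=> pP.
(* [set0] is admitted because [Zorn_bigcup] also asks for the union of the
   empty chain. *)
pose Over (A : set R) := A = set0 \/ proper_ideal A /\ P `<=` A.
have [F FOver Ftot|A [[A0|[pA PA]] Amax]] := @Zorn_bigcup R Over.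
- have [[X [FX nX0]]|allF0] := pselect (exists X, F X /\ X <> set0); last first.
    left; apply/seteqP; split => // x [X FX Xx]; apply: allF0; exists X.
    by split => // X0; rewrite X0 in Xx.
  pose G := [set Y | F Y /\ Y <> set0].
  have GOver Y : G Y -> proper_ideal Y /\ P `<=` Y.
    by move=> [FY Y0]; case: (FOver Y FY).
  have -> : \bigcup_(Y in F) Y = \bigcup_(Y in G) Y.
    apply/seteqP; split => x [Y FY Yx]; exists Y => //; last exact: FY.1.
    by split => // Y0; rewrite Y0 in Yx.
  right; split; [split|].
  + apply: ideal_bigcup_chain => [Y /GOver [[]]||] //.
      by move=> Y Z GY GZ; apply: Ftot; [case: GY|case: GZ].
    by exists X.
  + by move=> [Y /GOver [[_ nY1] _]].
  + by move=> x Px; exists X => //; apply: (GOver X (conj FX nX0)).2.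
- exfalso; apply: (Amax P); last by right; split.
  rewrite A0; split; first exact: sub0set.
  by move=> P0; case: pP.1 => /P0.
- by exists A; split => // J AJ pJ; apply: (Amax J AJ); right; split => // x /PA; apply: AJ.1.
Qed.

Lemma maximal_ideal_comax (Q : set R) : ideal Q ->
  (forall J, Q `<` J -> ~ proper_ideal J) ->
  forall s, ~ Q s -> exists q t, Q q /\ 1 = q + t * s.
Proof.
move=> [Q0 QD QM] Qmax s nQs.
pose J : set R := fun x => exists q t, Q q /\ x = q + t * s.
have idJ : ideal J.
  split.
  - by exists 0, 0; rewrite mul0r addr0.
  - move=> _ _ [q1 [t1 [Qq1 ->]]] [q2 [t2 [Qq2 ->]]].
    by exists (q1 + q2), (t1 + t2); split; [apply: QD | rewrite mulrDl addrACA].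
  - move=> r _ [q [t [Qq ->]]]; exists (r * q), (r * t).
    by split; [apply: QM | rewrite mulrDr mulrA].
have QJ : Q `<` J.
  split; first by move=> q Qq; exists q, 0; rewrite mul0r addr0.
  by move=> /(_ s) JQ; apply: nQs; apply: JQ; exists 0, 1; rewrite add0r mul1r.
by apply: contra_notP (Qmax J QJ) => nJ1.
Qed.

End MaximalIdeals.

Section ComultiplicationModules.
Variables (R : comNzRingType) (M : lmodType R).
Implicit Types (N L K : M -> Prop) (x y : M).

Definition ann x : set R := fun r => r *: x = 0.

Definition scale_ideal (I : set R) x : M -> Prop := fun y => exists r, I r /\ y = r *: x.

Definition Rspan x : M -> Prop := fun y => exists r, y = r *: x.

Lemma ideal_ann x : ideal (ann x).
Proof.
split; rewrite /ann; first by rewrite scale0r.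
- by move=> a b ax bx; rewrite scalerDl ax bx addr0.
- by move=> r a ax; rewrite -scalerA ax scaler0.
Qed.

Lemma submodule_scale_ideal (I : set R) x : ideal I -> submodule (scale_ideal I x).
Proof.
move=> [I0 ID IM]; split.
- by exists 0; rewrite scale0r.
- move=> _ _ [a [Ia ->]] [b [Ib ->]].
  by exists (a + b); split; [apply: ID | rewrite scalerDl].
- by move=> r _ [a [Ia ->]]; exists (r * a); split; [apply: IM | rewrite scalerA].
Qed.

Lemma submodule_Rspan x : submodule (Rspan x).
Proof.
split; first by exists 0; rewrite scale0r.
- by move=> _ _ [a ->] [b ->]; exists (a + b); rewrite scalerDl.
- by move=> r _ [a ->]; exists (r * a); rewrite scalerA.
Qed.

Lemma submoduleI N L : submodule N -> submodule L -> submodule (subI N L).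
Proof.
move=> [N0 ND NZ] [L0 LD LZ]; split; first by [].
- by move=> x y [Nx Lx] [Ny Ly]; split; [apply: ND | apply: LD].
- by move=> r x [Nx Lx]; split; [apply: NZ | apply: LZ].
Qed.

Lemma Rspan_subset N x : submodule N -> N x -> forall y, Rspan x y -> N y.
Proof. by move=> [_ _ NZ] Nx _ [r ->]; apply: NZ. Qed.

Lemma minimal_sub_subset N L : minimal_sub N -> submodule L ->
  nonzero_sub (subI N L) -> forall x, N x -> L x.
Proof.
move=> [sN _ Nmin] sL nNL x Nx.
by case: (Nmin _ (submoduleI sN sL) (fun y => @proj1 _ _) nNL x Nx).
Qed.

Lemma minimal_sub_Rspan x : x <> 0 ->
  (forall s, s *: x <> 0 -> exists t, (t * s) *: x = x) -> minimal_sub (Rspan x).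
Proof.
move=> x0 xgen; split; first exact: submodule_Rspan.
  by exists x; split => //; exists 1; rewrite scale1r.
move=> L [_ _ LZ] LRx [y [Ly y0]] _ [r ->].
have [s ys] := LRx y Ly.
have [t tsx] : exists t, (t * s) *: x = x by apply: xgen; rewrite -ys.
by rewrite -tsx -scalerA -ys; do 2 apply: (LZ).
Qed.

Lemma submodule_Soc : submodule (@Soc R M).
Proof.
split; first by exists [::]; rewrite big_nil.
- move=> _ _ [s1 [s1min ->]] [s2 [s2min ->]].
  exists (s1 ++ s2); split; last by rewrite big_cat.
  by move=> x; rewrite mem_cat => /orP[/s1min|/s2min].
- move=> r _ [s [smin ->]]; exists [seq r *: x | x <- s].
  split; last by rewrite big_map scaler_sumr.
  move=> _ /mapP[x xs ->]; have [K [Kmin Kx]] := smin x xs.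
  by exists K; split => //; case: Kmin => -[_ _ KZ] _ _; apply: KZ.
Qed.

Lemma minimal_sub_Soc K : minimal_sub K -> forall x, K x -> @Soc R M x.
Proof.
move=> Kmin x Kx; exists [:: x]; split; last by rewrite big_seq1.
by move=> y; rewrite inE => /eqP ->; exists K.
Qed.

Lemma Soc_subset K : submodule K ->
  (forall N, minimal_sub N -> forall x, N x -> K x) -> forall x, @Soc R M x -> K x.
Proof.
move=> [K0 KD _] minK _ [s [smin ->]].
elim: s smin => [|a s IHs] smin; first by rewrite big_nil.
rewrite big_cons; apply: KD; last by apply: IHs => x xs; apply: smin; rewrite inE xs orbT.
by have [N [Nmin Na]] := smin a (mem_head _ _); apply: minK Nmin _ Na.
Qed.

Lemma uniform_Soc_eq K : uniform M -> minimal_sub K -> @Soc R M = K.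
Proof.
move=> unifM Kmin; have [sK nK _] := Kmin.
have minK N : minimal_sub N -> forall x, N x -> K x.
  move=> Nmin; have [sN nN _] := Nmin.
  by apply: minimal_sub_subset => //; apply: unifM.
apply/funext => x; apply/propext; split; first exact: Soc_subset.
exact: minimal_sub_Soc.
Qed.

Lemma cocyclic_uniform : cocyclic M -> uniform M.
Proof.
move=> [Socmin Soclarge] N L sN sL nN nL.
have SocN := minimal_sub_subset Socmin sN (Soclarge N sN nN).
have SocL := minimal_sub_subset Socmin sL (Soclarge L sL nL).
have [_ [x [Socx x0]] _] := Socmin.
by exists x; split => //; split; [apply: SocN | apply: SocL].
Qed.

Hypothesis comultM : comultiplication M.

Lemma comultiplication_minimal_sub N : submodule N -> nonzero_sub N ->
  exists K, minimal_sub K /\ (forall x, K x -> N x).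
Proof.
move=> sN [m [Nm m0]].
have pann : proper_ideal (ann m) by split; [apply: ideal_ann | rewrite /ann scale1r].
have [Q [[idQ nQ1] annQ Qmax]] := exists_maximal_ideal pann.
have [_ QD _] := idQ.
have [I [_ QmI]] := comultM (submodule_scale_ideal m idQ).
have nQm : ~ scale_ideal Q m m.
  move=> [q [Qq mq]]; apply: nQ1; rewrite -(subrK q 1); apply: QD => //.
  by apply: annQ; rewrite /ann scalerBl scale1r -mq subrr.
have [r [Ir rm0]] : exists r, I r /\ r *: m <> 0.
  apply: contra_notP nQm => rm; apply/QmI => r Ir.
  by apply: contra_notP rm => rm0; exists r.
(* [Q m] is killed by [I], so [Q] kills [r m]. *)
have Qrm q : Q q -> q *: (r *: m) = 0.
  move=> Qq; rewrite scalerA mulrC -scalerA.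
  by apply: (proj1 (QmI _) _ r Ir); exists q.
exists (Rspan (r *: m)); split; last by apply: Rspan_subset => //; case: sN => _ _; apply.
apply: minimal_sub_Rspan => // s srm.
have nQs : ~ Q s by move=> /Qrm.
have [q [t [Qq e]]] := maximal_ideal_comax idQ Qmax nQs.
by exists t; rewrite -[in RHS](scale1r (r *: m)) e scalerDl Qrm // add0r.
Qed.

Lemma large_Soc : large (@Soc R M).
Proof.
move=> L sL nL; have [K [Kmin KL]] := comultiplication_minimal_sub sL nL.
have [_ [x [Kx x0]] _] := Kmin.
by exists x; split => //; split; [apply: minimal_sub_Soc Kmin _ Kx | apply: KL].
Qed.

Lemma uniform_cocyclic : (exists m : M, m <> 0) -> uniform M -> cocyclic M.
Proof.
move=> [m m0] unifM; split; last exact: large_Soc.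
have sM : submodule (fun _ : M => True) by [].
have [K [Kmin _]] := comultiplication_minimal_sub sM (ex_intro _ m (conj I m0)).
by rewrite (uniform_Soc_eq unifM Kmin).
Qed.

End ComultiplicationModules.

Theorem lemma2p5 (R : comNzRingType) (M : lmodType R) :
  comultiplication M -> (exists m : M, m <> 0) ->
  (uniform M <-> cocyclic M).
Proof.
by move=> comultM nzM; split; [exact: uniform_cocyclic | exact: cocyclic_uniform].
Qed.
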